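(* Let $p$ be a prime, $n$ a non-negative integer and $A_*$ a graded commutative $\mathbb F_p$-algebra. The subset $G_{p,n}(A_* )$ of $G_p(A_* )$ consisting of the elements $\alpha(X)=\sum_{i\ge0}\alpha_iX^{p^i}$ with $\alpha_i^{p^{n-i+1}}=0$ for $i=1,2,\dots,n$ and $\alpha_i=0$ for $i\ge n+1$ is a subgroup of $G_p(A_* )$.
   Context: Graded commutative means $ab=(-1)^{\deg a\deg b}ba$. If $p=2$, $G_2(A_* )$ is the set of power series $\alpha(X)=\sum_{i\ge0}\alpha_iX^{2^i}\in A_*[[X]]$ ($X$ of degree $-1$) with $\alpha_i\in A_{2^i-1}$ and $\alpha_0=1$. If $p$ is odd, let $\epsilon$ have degree $-1$ with $\epsilon^2=0$, $X$ degree $-2$, and $G_p(A_* )$ is the set of $\alpha(X)=\sum_{i\ge0}\alpha_iX^{p^i}\in (A_*\otimes_{\mathbb F_p}\mathbb F_p[\epsilon]/(\epsilon^2))[[X]]$ with $\alpha_i$ homogeneous of degree $2(p^i-1)$ and $\alpha_0-1\in(\epsilon)$. The group law is $\alpha(X)\cdot\beta(X)=\beta(\alpha(X))$, i.e. the coefficient of $X^{p^i}$ in $\alpha\cdot\beta$ is $\sum_{j=0}^i\alpha_{i-j}^{p^j}\beta_j$. *)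

From HB Require Import structures.
From mathcomp Require Import all_boot all_order all_algebra.
Set Implicit Arguments. Unset Strict Implicit. Unset Printing Implicit Defensive.
Import GRing.Theory.
Local Open Scope ring_scope.

Section GradedGroups.
Variable R : pzRingType.

(* A graded commutative F_p-algebra A_* = (+)_{k : int} A_k, presented as a ring R
   (the total algebra) together with the predicates A k (the homogeneous
   components of degree k). *)
Definition graded_comm_Fp_algebra (p : nat) (A : int -> {pred R}) : Prop :=
  p%:R = 0 :> R /\
      (forall k, 0 \in A k /\
         forall x y, x \in A k -> y \in A k -> x - y \in A k) /\
      1 \in A 0 /\
      (forall k l x y, x \in A k -> y \in A l -> x * y \in A (k + l)) /\
      (forall k l x y, x \in A k -> y \in A l ->
         x * y = (-1) ^+ `|(k * l)%R|%N * (y * x)) /\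
      (forall x, exists (s : seq int) (f : int -> R),
         (forall k, f k \in A k) /\ x = \sum_(k <- s) f k) /\
      (forall (s : seq int) (f : int -> R), uniq s ->
         (forall k, f k \in A k) -> \sum_(k <- s) f k = 0 ->
         forall k, k \in s -> f k = 0).

(* alpha(X) = sum_i alpha_i X^(2^i), alpha_i in A_{2^i-1}, alpha_0 = 1 *)
Definition G2 (A : int -> {pred R}) (alpha : nat -> R) : Prop :=
  alpha 0%N = 1 /\ forall i : nat, alpha i \in A ((2 ^ i)%N%:Z - 1).

Definition G2mul (alpha beta : nat -> R) : nat -> R :=
  fun i => \sum_(j < i.+1) alpha (i - j)%N ^+ (2 ^ j) * beta j.

Definition G2one : nat -> R := fun i => if i == 0%N then 1 else 0.

Definition G2n (A : int -> {pred R}) (n : nat) (alpha : nat -> R) : Prop :=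
  [/\ G2 A alpha,
      (forall i : nat, (1 <= i <= n)%N -> alpha i ^+ (2 ^ (n - i + 1)) = 0)
    & (forall i : nat, (n < i)%N -> alpha i = 0)].

(* All coefficients have even total degree, so an element of degree 2m of
   A_* (x) F_p[eps]/(eps^2) is  a + b eps  with a in A_{2m}, b in A_{2m+1};
   we represent it by the pair (a, b).  For such even-degree elements the graded
   tensor product multiplication is (a + b eps)(c + d eps) = ac + (ad + bc) eps
   (eps commutes with the even-degree c, and b eps d eps = -bd eps^2 = 0). *)
Definition dmul (x y : R * R) : R * R := (x.1 * y.1, x.1 * y.2 + x.2 * y.1).
Definition dadd (x y : R * R) : R * R := (x.1 + y.1, x.2 + y.2).
Definition dexp (x : R * R) (m : nat) : R * R := iter m (dmul x) (1, 0).

Definition Gp (p : nat) (A : int -> {pred R}) (alpha : nat -> R * R) : Prop :=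
  (alpha 0%N).1 = 1 /\
  forall i : nat, (alpha i).1 \in A (2 * ((p ^ i)%N%:Z - 1))
               /\ (alpha i).2 \in A (2 * ((p ^ i)%N%:Z - 1) + 1).

Definition Gpmul (p : nat) (alpha beta : nat -> R * R) : nat -> R * R :=
  fun i => \big[dadd/(0, 0)]_(j < i.+1) dmul (dexp (alpha (i - j)%N) (p ^ j)) (beta j).

Definition Gpone : nat -> R * R := fun i => if i == 0%N then (1, 0) else (0, 0).

Definition Gpn (p : nat) (A : int -> {pred R}) (n : nat) (alpha : nat -> R * R) : Prop :=
  [/\ Gp p A alpha,
      (forall i : nat, (1 <= i <= n)%N -> dexp (alpha i) (p ^ (n - i + 1)) = (0, 0))
    & (forall i : nat, (n < i)%N -> alpha i = (0, 0))].

End GradedGroups.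

Definition is_subgroup (T : Type) (G H : T -> Prop) (mul : T -> T -> T) (e : T) : Prop :=
  [/\ (forall x, H x -> G x), H e,
      (forall x y, H x -> H y -> H (mul x y))
    & (forall x, H x -> exists y, [/\ H y, mul x y = e & mul y x = e])].

(* Both groups are instances of one construction over a ring T of characteristic
   p: sequences (a_i) whose coefficients a_i lie in pairwise commuting additive
   groups D i (the homogeneous pieces of the right degree) and whose constant
   term lies in a multiplicative set U of elements with a^p = 1.  As x |-> x^(p^e)
   is additive on commuting elements, the product is associative, and a right
   inverse can be solved for coefficient by coefficient.  The truncation
   conditions of G_{p,n} say exactly that a_i^(p^e) = 0 whenever i + e > n;
   every term of a coefficient of a product or of an inverse has a factor
   satisfying such an identity.  For odd p the coefficients are dual numbers
   a + b eps, which form a ring once eps is taken to be central. *)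

From HB Require Import structures.
From mathcomp Require Import all_boot all_order all_algebra.
From mathcomp Require Import zify ring.
From Stdlib Require Import FunctionalExtensionality.
Set Implicit Arguments. Unset Strict Implicit. Unset Printing Implicit Defensive.
Import GRing.Theory.
Local Open Scope ring_scope.

Lemma commrXX (T : pzRingType) (x y : T) m n :
  GRing.comm x y -> GRing.comm (x ^+ m) (y ^+ n).
Proof. by move=> cxy; apply/commrX/commr_sym/commrX/commr_sym. Qed.

Lemma sum_triangle (V : nmodType) (F : nat -> nat -> V) i :
  \sum_(j < i.+1) \sum_(k < (i - j).+1) F j k =
  \sum_(m < i.+1) \sum_(j < m.+1) F j (m - j)%N.
Proof.
elim: i => [|i IH]; first by rewrite !big_ord_recr !big_ord0 /= !add0r.
rewrite [RHS]big_ord_recr /= -IH.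
transitivity (\sum_(j < i.+2) (\sum_(k < i.+1 - j) F j k + F j (i.+1 - j)%N)).
  by apply: eq_bigr => j _; rewrite big_ord_recr.
rewrite big_split /= big_ord_recr /= subnn big_ord0 addr0.
by congr (_ + _); apply: eq_bigr => j _; rewrite subSn // -ltnS.
Qed.

Section PrimeCharFrobenius.
Variables (T : pzRingType) (p : nat).
Hypotheses (p_prime : prime p) (pcharT : p%:R = 0 :> T).

Lemma exprpD_comm (x y : T) : GRing.comm x y -> (x + y) ^+ p = x ^+ p + y ^+ p.
Proof.
move=> cxy; have [q def_p] : exists q, p = q.+1 by exists p.-1; rewrite prednK ?prime_gt0.
rewrite exprDn_comm // def_p big_ord_recr big_ord_recl /= subn0 subnn bin0 binn.
rewrite -def_p !expr0 mulr1 mul1r !mulr1n big1 ?addr0 // => i _.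
have /dvdnP[m ->] : (p %| 'C(p, bump 0 i))%N.
  by apply: prime_dvd_bin; rewrite // def_p /bump /= add1n ltnS (valP i).
by rewrite mulnC mulrnA -[_ *+ p]mulr_natr pcharT mulr0 mul0rn.
Qed.

Lemma expr0pn e : 0 ^+ (p ^ e) = 0 :> T.
Proof. by rewrite expr0n expn_eq0 eqn0Ngt prime_gt0. Qed.

Lemma exprpnD_comm (x y : T) e :
  GRing.comm x y -> (x + y) ^+ (p ^ e) = x ^+ (p ^ e) + y ^+ (p ^ e).
Proof.
move=> cxy; elim: e => [|e IH]; first by rewrite !expn0 !expr1.
by rewrite expnSr !exprM IH exprpD_comm //; apply: commrXX.
Qed.

Lemma exprpn_sum (I : Type) (r : seq I) (F : I -> T) e :
  (forall i j, GRing.comm (F i) (F j)) ->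
  (\sum_(i <- r) F i) ^+ (p ^ e) = \sum_(i <- r) F i ^+ (p ^ e).
Proof.
move=> cF; elim: r => [|i r IH]; first by rewrite !big_nil expr0pn.
by rewrite !big_cons exprpnD_comm ?IH //; apply: commr_sum => j _.
Qed.

Lemma exprpn_eq0W (x : T) e e' :
  x ^+ (p ^ e) = 0 -> (e <= e')%N -> x ^+ (p ^ e') = 0.
Proof. by move=> x0 le_ee'; rewrite -(subnKC le_ee') expnD exprM x0 expr0pn. Qed.

End PrimeCharFrobenius.

Section SubstitutionGroup.
Variables (T : pzRingType) (p : nat).
Hypotheses (p_prime : prime p) (pcharT : p%:R = 0 :> T).

(* D i holds the possible coefficients of X^(p^i): the degree count behind
   D_frobM is p^j (p^k - 1) + (p^j - 1) = p^(k+j) - 1. *)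
Variable D : nat -> T -> Prop.
Hypotheses (D0 : forall i, D i 0) (D1 : D 0 1).
Hypothesis DB : forall i x y, D i x -> D i y -> D i (x - y).
Hypothesis D_comm : forall i j x y, D i x -> D j y -> GRing.comm x y.
Hypothesis D_frobM : forall k j x y, D k x -> D j y -> D (k + j) (x ^+ (p ^ j) * y).

Variable U : T -> Prop.
Hypotheses (U1 : U 1) (UM : forall x y, U x -> U y -> U (x * y)).
Hypothesis U_expp : forall x, U x -> x ^+ p = 1.

Definition gmul (a b : nat -> T) i := \sum_(j < i.+1) a (i - j)%N ^+ (p ^ j) * b j.

Definition gone i : T := if i == 0%N then 1 else 0.

Definition homogeneous (a : nat -> T) := forall i, D i (a i).

Definition gseries a := U (a 0%N) /\ homogeneous a.

Definition nil_upto n (a : nat -> T) :=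
  forall i e, (0 < i)%N -> (n < i + e)%N -> a i ^+ (p ^ e) = 0.

Definition gseries_trunc n a :=
  [/\ gseries a, (forall i, (1 <= i <= n)%N -> a i ^+ (p ^ (n - i + 1)) = 0)
    & (forall i, (n < i)%N -> a i = 0)].

(* (a b)_i = a_0^(p^i) b_i + sum_(j < i) a_(i-j)^(p^j) b_j with a_0^(p^i) = 1
   for i > 0, so b_i is determined by b_0, ..., b_(i-1). *)
Fixpoint ginv_upto (a : nat -> T) i : nat -> T :=
  if i is i'.+1 then fun k =>
    if (k <= i')%N then ginv_upto a i' k
    else - \sum_(j < i) a (i - j)%N ^+ (p ^ j) * ginv_upto a i' j
  else fun=> a 0%N ^+ p.-1.

Definition ginv a i := ginv_upto a i i.

Lemma ginv_uptoE a i k : (k <= i)%N -> ginv_upto a i k = ginv a k.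
Proof.
elim: i => [|i IH] le_ki; first by case: k le_ki => [|].
rewrite /=; case: leqP => [/IH//|lt_ik].
have -> : k = i.+1 by lia.
by rewrite /ginv /= ltnn.
Qed.

Lemma ginv0 a : ginv a 0 = a 0%N ^+ p.-1.
Proof. by []. Qed.

Lemma ginvS a i :
  ginv a i.+1 = - \sum_(j < i.+1) a (i.+1 - j)%N ^+ (p ^ j) * ginv a j.
Proof.
rewrite /ginv /= ltnn; congr (- _); apply: eq_bigr => j _.
by rewrite ginv_uptoE // -ltnS.
Qed.

Lemma gmul0 a b : gmul a b 0 = a 0%N * b 0%N.
Proof. by rewrite /gmul big_ord1 expn0 expr1. Qed.

Lemma eq_gmul a a' b b' : a =1 a' -> b =1 b' -> gmul a b =1 gmul a' b'.
Proof. by move=> eq_a eq_b i; apply: eq_bigr => j _; rewrite eq_a eq_b. Qed.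

Lemma gmulr1 a : gmul a gone =1 a.
Proof.
move=> i; rewrite /gmul big_ord_recl /= subn0 expn0 expr1 mulr1 big1 ?addr0 //.
by move=> j _; rewrite mulr0.
Qed.

Lemma gmul1r a : gmul gone a =1 a.
Proof.
move=> i; rewrite /gmul big_ord_recr /= subnn expr1n mul1r big1 ?add0r // => j _.
by rewrite /gone subn_eq0 leqNgt ltn_ord expr0pn ?mul0r.
Qed.

Lemma D_add i x y : D i x -> D i y -> D i (x + y).
Proof.
move=> Dx Dy; have Dny : D i (- y) by rewrite -sub0r; apply: DB.
by rewrite -[y]opprK; apply: DB.
Qed.

Lemma D_sum i (I : Type) (r : seq I) (F : I -> T) :
  (forall j, D i (F j)) -> D i (\sum_(j <- r) F j).
Proof.
move=> DF; elim: r => [|j r IH]; first by rewrite big_nil.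
by rewrite big_cons; apply: D_add.
Qed.

Lemma D_term i j x y : (j <= i)%N -> D (i - j) x -> D j y -> D i (x ^+ (p ^ j) * y).
Proof. by move=> le_ji Dx Dy; rewrite -(subnK le_ji); apply: D_frobM. Qed.

Lemma D0X x m : D 0 x -> D 0 (x ^+ m).
Proof.
move=> Dx; elim: m => [|m IH]; first by rewrite expr0.
by move: (D_frobM Dx IH); rewrite expn0 expr1 -exprS addn0.
Qed.

Lemma D_gmul_term a b i (j : 'I_i.+1) : homogeneous a -> homogeneous b ->
  D i (a (i - j)%N ^+ (p ^ j) * b j).
Proof. by move=> Da Db; apply: D_term; [rewrite -ltnS | apply: Da | apply: Db]. Qed.

Lemma homogeneous_gmul a b :
  homogeneous a -> homogeneous b -> homogeneous (gmul a b).
Proof. by move=> Da Db i; apply: D_sum => j; apply: D_gmul_term. Qed.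

Lemma gseriesM a b : gseries a -> gseries b -> gseries (gmul a b).
Proof.
by move=> [Ua Da] [Ub Db]; split; [rewrite gmul0; apply: UM | apply: homogeneous_gmul].
Qed.

Lemma exprpn_term i j x y k e : D i x -> D j y ->
  (x ^+ (p ^ k) * y) ^+ (p ^ e) = x ^+ (p ^ (k + e)) * y ^+ (p ^ e).
Proof.
move=> Dx Dy; rewrite exprMn_comm -?exprM -?expnD //.
by apply/commr_sym/commrX/commr_sym; apply: D_comm Dx Dy.
Qed.

Lemma exprpn_gmul a b i e : homogeneous a -> homogeneous b ->
  gmul a b i ^+ (p ^ e) =
  \sum_(j < i.+1) a (i - j)%N ^+ (p ^ (j + e)) * b j ^+ (p ^ e).
Proof.
move=> Da Db; rewrite exprpn_sum //; last first.
  by move=> j k; apply: (@D_comm i i); apply: D_gmul_term.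
by apply: eq_bigr => j _; apply: exprpn_term; [apply: Da | apply: Db].
Qed.

Lemma gmulA a b c : homogeneous a -> homogeneous b -> homogeneous c ->
  gmul (gmul a b) c =1 gmul a (gmul b c).
Proof.
move=> Da Db Dc i; rewrite /gmul.
under eq_bigr => j _ do rewrite exprpn_gmul // mulr_suml.
pose F j k := a (i - j - k)%N ^+ (p ^ (k + j)) * b k ^+ (p ^ j) * c j.
rewrite (sum_triangle F) /F.
apply: eq_bigr => m _; rewrite mulr_sumr; apply: eq_bigr => j _.
have le_jm : (j <= m)%N by rewrite -ltnS.
have -> : (i - j - (m - j) = i - m)%N by have := ltn_ord m; lia.
by rewrite mulrA subnK.
Qed.

Lemma gmulrV a : a 0%N ^+ p = 1 -> gmul a (ginv a) =1 gone.
Proof.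
move=> a0p [|i]; first by rewrite gmul0 ginv0 -exprS prednK ?prime_gt0.
by rewrite /gmul big_ord_recr /= subnn expnS exprM a0p expr1n mul1r ginvS addrN.
Qed.

Lemma homogeneous_ginv a : homogeneous a -> homogeneous (ginv a).
Proof.
move=> Da; elim/ltn_ind => -[|i] IH; first exact/D0X/Da.
rewrite ginvS -sub0r; apply: DB => //; apply: D_sum => j.
by apply: D_term; [exact/ltnW/ltn_ord | apply: Da | apply: IH].
Qed.

Lemma gseriesV a : gseries a -> gseries (ginv a).
Proof.
move=> [Ua Da]; split; last exact: homogeneous_ginv.
by rewrite ginv0; elim: p.-1 => [|m IH]; rewrite ?expr0 // exprS; apply: UM.
Qed.

Lemma gmulVr a : gseries a -> gmul (ginv a) a =1 gone.
Proof.
move=> Ga; have Gb := gseriesV Ga; have Gc := gseriesV Gb.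
(* a = a (b c) = (a b) c = c for b = ginv a and c = ginv b. *)
have a_eq_c : a =1 ginv (ginv a).
  move=> i; rewrite -[a i]gmulr1 -(eq_gmul (frefl a) (gmulrV (U_expp Gb.1)) i).
  rewrite -gmulA; [|exact: Ga.2|exact: Gb.2|exact: Gc.2].
  by rewrite (eq_gmul (gmulrV (U_expp Ga.1)) (frefl _) i) gmul1r.
by move=> i; rewrite (eq_gmul (frefl _) a_eq_c i) gmulrV //; apply: U_expp Gb.1.
Qed.

Lemma homogeneous_gone : homogeneous gone.
Proof. by case. Qed.

Lemma nil_uptoP n a : nil_upto n a <->
  (forall i, (1 <= i <= n)%N -> a i ^+ (p ^ (n - i + 1)) = 0) /\
  (forall i, (n < i)%N -> a i = 0).
Proof.
split=> [nil_a | [nil_a trunc_a] i e i_gt0 lt_n_ie].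
  split=> [i /andP[i_gt0 le_in] | i lt_ni]; first by apply: nil_a; lia.
  by have := nil_a i 0%N; rewrite expn0 expr1; apply; lia.
have [le_in | lt_ni] := leqP i n; last by rewrite trunc_a ?expr0pn.
by apply: exprpn_eq0W (nil_a i _) _; lia.
Qed.

Lemma gseries_truncP n a : gseries_trunc n a <-> gseries a /\ nil_upto n a.
Proof.
split=> [[Ga nil1 nil2] | [Ga /nil_uptoP[nil1 nil2]]]; last by split.
by split=> //; apply/nil_uptoP.
Qed.

Lemma nil_upto_gone n : nil_upto n gone.
Proof. by move=> [|i] e //= _ _; rewrite expr0pn. Qed.

Lemma nil_upto_gmul n a b : homogeneous a -> homogeneous b ->
  nil_upto n a -> nil_upto n b -> nil_upto n (gmul a b).
Proof.
move=> Da Db nil_a nil_b i e i_gt0 lt_n_ie.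
rewrite exprpn_gmul // big_ord_recr /= subnn nil_b // mulr0 addr0.
by apply: big1 => j _; rewrite nil_a ?mul0r //; have := ltn_ord j; lia.
Qed.

Lemma nil_upto_ginv n a : homogeneous a -> nil_upto n a -> nil_upto n (ginv a).
Proof.
move=> Da nil_a [|i] e // _ lt_n_ie; have Db := homogeneous_ginv Da.
have D_ginv_term (j : 'I_i.+1) : D i.+1 (a (i.+1 - j)%N ^+ (p ^ j) * ginv a j).
  by apply: D_term; [exact/ltnW/ltn_ord | apply: Da | apply: Db].
rewrite ginvS exprNn exprpn_sum // => [|j k]; last exact: D_comm.
rewrite big1 ?mulr0 // => j _; rewrite (exprpn_term _ _ (Da _) (Db _)).
by rewrite nil_a ?mul0r //; have := ltn_ord j; lia.
Qed.

Theorem gseries_trunc_subgroup n : is_subgroup gseries (gseries_trunc n) gmul gone.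
Proof.
split=> [a [] // | | a b | a].
- apply/gseries_truncP; split; last exact: nil_upto_gone.
  by split; [exact: U1 | exact: homogeneous_gone].
- move=> /gseries_truncP[[Ua Da] nil_a] /gseries_truncP[[Ub Db] nil_b].
  apply/gseries_truncP; split; first exact: gseriesM.
  exact: nil_upto_gmul.
- move=> /gseries_truncP[Ga nil_a]; exists (ginv a); split.
  + by apply/gseries_truncP; split; [exact: gseriesV | apply: nil_upto_ginv Ga.2 nil_a].
  + exact/functional_extensionality/gmulrV/U_expp/Ga.1.
  + exact/functional_extensionality/gmulVr.
Qed.

End SubstitutionGroup.

Definition dual (R : pzRingType) := (R * R)%type.

Section DualNumbers.
Variable R : pzRingType.

HB.instance Definition _ := GRing.Zmodule.on (dual R).

Fact dmulA : associative (@dmul R).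
Proof.
move=> [a b] [c d] [e f]; rewrite /dmul /=.
by rewrite !mulrA mulrDl mulrDr !mulrA addrA.
Qed.

Fact dmul1 : left_id (1, 0) (@dmul R).
Proof. by move=> [a b]; rewrite /dmul /= !mul1r mul0r addr0. Qed.

Fact dmulr1 : right_id (1, 0) (@dmul R).
Proof. by move=> [a b]; rewrite /dmul /= !mulr1 mulr0 add0r. Qed.

Fact dmulDl : left_distributive (@dmul R) +%R.
Proof.
by move=> [a b] [c d] [e f]; rewrite /dmul /= !mulrDl addrACA.
Qed.

Fact dmulDr : right_distributive (@dmul R) +%R.
Proof.
by move=> [a b] [c d] [e f]; rewrite /dmul /= !mulrDr addrACA.
Qed.

HB.instance Definition _ :=
  GRing.Zmodule_isPzRing.Build (dual R) dmulA dmul1 dmulr1 dmulDl dmulDr.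

Lemma dexp_exp : @dexp R = @GRing.exp (dual R).
Proof.
apply: functional_extensionality => x; apply: functional_extensionality.
by elim=> [|m IH]; rewrite ?expr0 // exprS -IH.
Qed.

Lemma dual_natr n : n%:R = (n%:R, 0) :> dual R.
Proof.
elim: n => [|n IH] //; rewrite !mulrS IH.
by congr (_, _); rewrite /= add0r.
Qed.

Lemma dual_unipotentX (b : R) m : ((1, b) : dual R) ^+ m = (1, b *+ m).
Proof.
elim: m => [|m IH]; first by rewrite expr0.
by rewrite exprS IH /GRing.mul /= /dmul /= !mul1r mulr1 mulrS addrC.
Qed.

End DualNumbers.

Section GradedAlgebra.
Variables (R : pzRingType) (p : nat) (A : int -> {pred R}).
Hypothesis hA : graded_comm_Fp_algebra p A.

Lemma graded_pchar : p%:R = 0 :> R.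
Proof. by case: hA. Qed.

Lemma graded0 k : 0 \in A k.
Proof. by case: hA => _ [/(_ k)[]]. Qed.

Lemma gradedB k x y : x \in A k -> y \in A k -> x - y \in A k.
Proof. by case: hA => _ [/(_ k)[_ gradedB] _]; apply: gradedB. Qed.

Lemma gradedD k x y : x \in A k -> y \in A k -> x + y \in A k.
Proof.
move=> Ax Ay; have Any : - y \in A k by rewrite -sub0r; apply: gradedB (graded0 k) Ay.
by rewrite -[y]opprK; apply: gradedB.
Qed.

Lemma graded1 : 1 \in A 0.
Proof. by case: hA => _ [_ []]. Qed.

Lemma gradedM k l x y : x \in A k -> y \in A l -> x * y \in A (k + l).
Proof. by case: hA => _ [_ [_ [gradedM _]]]; apply: gradedM. Qed.

Lemma graded_comm k l x y : x \in A k -> y \in A l ->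
  x * y = (-1) ^+ `|(k * l)%R|%N * (y * x).
Proof. by case: hA => _ [_ [_ [_ [graded_comm _]]]]; apply: graded_comm. Qed.

Lemma gradedX k x m : x \in A k -> x ^+ m \in A (k * m%:Z).
Proof.
move=> Ax; elim: m => [|m IH]; first by rewrite expr0 mulr0 graded1.
by rewrite exprS -addn1 PoszD mulrDr mulr1 addrC; apply: gradedM.
Qed.

Lemma graded_even_comm k l x y : x \in A (2 * k) -> y \in A l -> GRing.comm x y.
Proof.
move=> Ax Ay; rewrite /GRing.comm (graded_comm Ax Ay) -mulrA abszM.
by rewrite exprM sqrrN !expr1n mul1r.
Qed.

Definition dual_homog (d : int) (x : dual R) := x.1 \in A d /\ x.2 \in A (d + 1).

Lemma dual_homog0 d : dual_homog d 0.
Proof. by split; apply: graded0. Qed.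

Lemma dual_homog1 : dual_homog 0 1.
Proof. by split; [apply: graded1 | apply: graded0]. Qed.

Lemma dual_homogB d x y : dual_homog d x -> dual_homog d y -> dual_homog d (x - y).
Proof. by move=> [Ax1 Ax2] [Ay1 Ay2]; split; apply: gradedB. Qed.

Lemma dual_homogM d e x y :
  dual_homog d x -> dual_homog e y -> dual_homog (d + e) (x * y).
Proof.
move=> [Ax1 Ax2] [Ay1 Ay2]; split; first exact: gradedM.
rewrite -addrA; apply: gradedD (gradedM Ax1 Ay2) _.
by rewrite addrA addrAC; apply: gradedM.
Qed.

Lemma dual_homogX d x m : dual_homog d x -> dual_homog (d * m%:Z) (x ^+ m).
Proof.
move=> Hx; elim: m => [|m IH].
  by rewrite expr0 mulr0; apply: dual_homog1.
by rewrite exprS -addn1 PoszD mulrDr mulr1 addrC; apply: dual_homogM.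
Qed.

Lemma dual_homog_comm k l x y :
  dual_homog (2 * k) x -> dual_homog (2 * l) y -> GRing.comm x y.
Proof.
move=> [Ax1 Ax2] [Ay1 Ay2]; rewrite /GRing.comm /GRing.mul /= /dmul /=.
rewrite (graded_even_comm Ax1 Ay1) (graded_even_comm Ax1 Ay2).
by rewrite (graded_even_comm Ay1 Ax2) addrC.
Qed.

End GradedAlgebra.

Lemma G2n_subgroup (R : pzRingType) (A : int -> {pred R}) n :
  graded_comm_Fp_algebra 2 A ->
  is_subgroup (G2 A) (G2n A n) (@G2mul R) (@G2one R).
Proof.
move=> hA; have pchar2 := graded_pchar hA.
have opp1 : -1 = 1 :> R by apply/eqP; rewrite -subr_eq0 -opprD -mulr2n pchar2 oppr0.
apply: (@gseries_trunc_subgroup R 2 _ pchar2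
  (fun i x => x \in A ((2 ^ i)%N%:Z - 1)) _ _ _ _ _ (fun x => x = 1)) => //.
- by move=> i; apply: (graded0 hA).
- by rewrite expn0 subrr; apply: (graded1 hA).
- by move=> i x y; apply: (gradedB hA).
- by move=> i j x y Ax Ay; rewrite /GRing.comm (graded_comm hA Ax Ay) opp1 expr1n mul1r.
- move=> k j x y Ax Ay; have := gradedM hA (gradedX hA (2 ^ j) Ax) Ay.
  by rewrite expnD PoszM; congr (_ \in A _); ring.
- by move=> x y -> ->; rewrite mulr1.
- by move=> x ->; rewrite expr1n.
Qed.

Lemma Gpn_subgroup p (R : pzRingType) (A : int -> {pred R}) n :
  prime p -> graded_comm_Fp_algebra p A ->
  is_subgroup (Gp p A) (Gpn p A n) (@Gpmul R p) (@Gpone R).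
Proof.
move=> p_prime hA; have pcharR := graded_pchar hA.
rewrite /Gpn /Gpmul dexp_exp.
apply: (@gseries_trunc_subgroup (dual R) p p_prime _
  (fun i => dual_homog A (2 * ((p ^ i)%N%:Z - 1))) _ _ _ _ _ (fun x => x.1 = 1)) => //.
- by rewrite dual_natr pcharR.
- by move=> i; apply: (dual_homog0 hA).
- by rewrite expn0 subrr mulr0; apply: (dual_homog1 hA).
- by move=> i x y; apply: (dual_homogB hA).
- by move=> i j x y; apply: (dual_homog_comm hA).
- move=> k j x y Dx Dy; have := dual_homogM hA (dual_homogX hA (p ^ j) Dx) Dy.
  by rewrite expnD PoszM; congr (dual_homog A _ _); ring.
- by move=> x y x1 y1; rewrite /GRing.mul /= /dmul /= x1 y1 mulr1.
- move=> [a b] /= ->; rewrite dual_unipotentX.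
  by rewrite -mulr_natr pcharR mulr0.
Qed.

Theorem proposition3p5 (p : nat) (R : pzRingType) (A : int -> {pred R}) (n : nat) :
  prime p -> graded_comm_Fp_algebra p A ->
  (p = 2%N -> is_subgroup (G2 A) (G2n A n) (@G2mul R) (@G2one R)) /\
  (p <> 2%N -> is_subgroup (Gp p A) (Gpn p A n) (@Gpmul R p) (@Gpone R)).
Proof.
move=> p_prime hA; split=> [p2 | _]; last exact: Gpn_subgroup.
by move: hA; rewrite p2; apply: G2n_subgroup.
Qed.
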